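(* Suppose that for some $j\in\{2,\dots,n-1\}$ and $\ell>0$ the offline optimal solution takes the form of Structure 1 or Structure 2 on the interval $[j,j+\ell-1]\subseteq\{2,\dots,n-1\}$. Then the optimal dual variable satisfies $\lambda\le \frac{(B+G)\ell}{2}$.
   Context: Setting: $n\ge 3$, $B\ge 1$, $G\ge B$, labels $y_1,\dots,y_n\in[-G,G]$; $[a,b]=\{a,\dots,b\}$. Given $C_n>0$, the offline optimal $u_1,\dots,u_n$ is an optimal solution of: minimize $\frac12\sum_{t=1}^n(y_t-\tilde u_t)^2$ over $\tilde u\in\mathbb R^n$ subject to $\sum_{t=2}^{n}|\tilde u_t-\tilde u_{t-1}|\le C_n$ and $-B\le\tilde u_t\le B$ for all $t$. Let $\lambda\ge 0$ be an optimal dual variable for the total variation constraint and $\gamma_t^-,\gamma_t^+\ge0$ optimal dual variables for $-B\le\tilde u_t$ and $\tilde u_t\le B$. They satisfy the KKT conditions: there are $s_t\in[-1,1]$ ($t=1,\dots,n-1$) with $s_t=\mathrm{sign}(u_{t+1}-u_t)$ whenever $u_{t+1}\ne u_t$, and with $s_0=s_n=0$, such that $u_t-y_t=\lambda(s_t-s_{t-1})+\gamma_t^--\gamma_t^+$ for all $t\in[n]$, $\lambda(\sum_{t=2}^n|u_t-u_{t-1}|-C_n)=0$, $\gamma_t^-(u_t+B)=0$, $\gamma_t^+(u_t-B)=0$. Structure 1 on $[a,b]\subseteq\{2,\dots,n-1\}$: $u_j=u_a\in(-B,B)$ for all $j\in[a,b]$, $u_b>u_{b+1}$ and $u_a>u_{a-1}$.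 Structure 2 on $[a,b]\subseteq\{2,\dots,n-1\}$: $u_j=u_a\in(-B,B)$ for all $j\in[a,b]$, $u_b<u_{b+1}$ and $u_a<u_{a-1}$. *)

(* R an abstract real field; sequences indexed 1..n as nat -> R. *)
From mathcomp Require Import all_boot all_order all_algebra.
Set Implicit Arguments. Unset Strict Implicit. Unset Printing Implicit Defensive.
Import Order.TTheory GRing.Theory Num.Theory.
Local Open Scope ring_scope.

Definition objective {R : realFieldType} (n : nat) (y v : nat -> R) : R :=
  2^-1 * \sum_(1 <= t < n.+1) (y t - v t) ^+ 2.

Definition total_variation {R : realFieldType} (n : nat) (v : nat -> R) : R :=
  \sum_(2 <= t < n.+1) `|v t - v t.-1|.

Definition feasible {R : realFieldType} (n : nat) (B Cn : R) (v : nat -> R) : Prop :=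
  total_variation n v <= Cn /\ (forall t, (1 <= t <= n)%N -> - B <= v t <= B).

Definition offline_optimal {R : realFieldType} (n : nat) (B Cn : R) (y u : nat -> R)
  : Prop :=
  feasible n B Cn u /\
  (forall v : nat -> R, feasible n B Cn v -> objective n y u <= objective n y v).

(* KKT conditions with multipliers lambda (TV constraint), gamma^- / gamma^+
   (box constraints) and subgradient signs s_0..s_n. *)
Definition KKT {R : realFieldType} (n : nat) (B Cn : R) (y u : nat -> R)
  (lam : R) (gm gp : nat -> R) : Prop :=
  0 <= lam /\
  (forall t, (1 <= t <= n)%N -> 0 <= gm t /\ 0 <= gp t) /\
  exists s : nat -> R,
    s 0%N = 0 /\ s n = 0 /\
    (forall t, (1 <= t <= n.-1)%N -> -1 <= s t <= 1) /\
    (forall t, (1 <= t <= n.-1)%N -> u t.+1 != u t -> s t = Num.sg (u t.+1 - u t)) /\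
    (forall t, (1 <= t <= n)%N ->
        u t - y t = lam * (s t - s t.-1) + gm t - gp t) /\
    lam * (total_variation n u - Cn) = 0 /\
    (forall t, (1 <= t <= n)%N -> gm t * (u t + B) = 0 /\ gp t * (u t - B) = 0).

Definition structure1 {R : realFieldType} (u : nat -> R) (B : R) (a b : nat) : Prop :=
  (forall i, (a <= i <= b)%N -> u i = u a) /\ - B < u a < B /\
  u b.+1 < u b /\ u a.-1 < u a.

Definition structure2 {R : realFieldType} (u : nat -> R) (B : R) (a b : nat) : Prop :=
  (forall i, (a <= i <= b)%N -> u i = u a) /\ - B < u a < B /\
  u b < u b.+1 /\ u a < u a.-1.

From mathcomp Require Import all_boot all_order all_algebra.
From mathcomp Require Import zify lra.

Set Implicit Arguments.
Unset Strict Implicit.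
Unset Printing Implicit Defensive.
Import Order.TTheory GRing.Theory Num.Theory.
Local Open Scope ring_scope.

(* On a flat stretch [a, b] strictly inside the box the box multipliers vanish,
   so stationarity reads u_t - y_t = lam (s_t - s_{t-1}) there, and summing over
   the stretch telescopes to lam (s_b - s_{a-1}).  Both kinks at the ends of the
   stretch go the same way (a local maximum or minimum), so s_b and s_{a-1} are
   opposite signs and the sum has modulus 2 lam; each of its l terms is bounded
   by |u_t| + |y_t| <= B + G. *)

Lemma norm_sum_nat_le_const (R : numDomainType) (F : nat -> R) (c : R) (m p : nat) :
  (forall t, (m <= t < p)%N -> `|F t| <= c) ->
  `|\sum_(m <= t < p) F t| <= c *+ (p - m).
Proof.
move=> Fc; rewrite -sumr_const_nat.
by apply: le_trans (ler_norm_sum _ _ _) _; apply: ler_sum_nat.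
Qed.

Lemma slack_multiplier_eq0 (R : idomainType) (g x : R) : g * x = 0 -> x != 0 -> g = 0.
Proof. by move/eqP; rewrite mulf_eq0 => /orP[/eqP|/eqP->]; rewrite ?eqxx. Qed.

Section FlatStretch.

Variables (R : realFieldType) (n : nat) (B : R) (y u gm gp s : nat -> R) (lam : R).
Variables (a b : nat).

Hypothesis stationarity : forall t, (1 <= t <= n)%N ->
  u t - y t = lam * (s t - s t.-1) + gm t - gp t.
Hypothesis slackness : forall t, (1 <= t <= n)%N ->
  gm t * (u t + B) = 0 /\ gp t * (u t - B) = 0.
Hypothesis flat : forall t, (a <= t <= b)%N -> u t = u a.
Hypothesis interior : - B < u a < B.
Hypotheses (a_ge1 : (1 <= a)%N) (b_le_n : (b <= n)%N).

Lemma flat_stationarity t : (a <= t <= b)%N -> u t - y t = lam * (s t - s t.-1).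
Proof.
move=> /andP[a_le_t t_le_b]; have tn : (1 <= t <= n)%N by lia.
have ut : u t = u a by apply: flat; lia.
have /andP[lo hi] := interior; have [gm_slack gp_slack] := slackness tn.
rewrite stationarity //.
have -> : gm t = 0 by apply: slack_multiplier_eq0 gm_slack _; rewrite ut; lra.
have -> : gp t = 0 by apply: slack_multiplier_eq0 gp_slack _; rewrite ut; lra.
by rewrite addr0 subr0.
Qed.

Lemma flat_sum_telescopes : (a <= b)%N ->
  \sum_(a <= t < b.+1) (u t - y t) = lam * (s b - s a.-1).
Proof.
move=> ab; rewrite mulrBr (telescope_sumr_eq (fun k => lam * s k.-1)) //; first lia.
by move=> k /andP[ak kb]; rewrite flat_stationarity ?mulrBr //; lia.
Qed.

End FlatStretch.

Lemma kink_signs_gap (R : realFieldType) (n : nat) (B : R) (u s : nat -> R) (a b : nat) :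
  (forall t, (1 <= t <= n.-1)%N -> u t.+1 != u t -> s t = Num.sg (u t.+1 - u t)) ->
  (2 <= a)%N -> (a <= b <= n.-1)%N ->
  structure1 u B a b \/ structure2 u B a b ->
  `|s b - s a.-1| = 2.
Proof.
move=> sgn a2 /andP[ab bn].
have [ta tb] : (1 <= a.-1 <= n.-1)%N /\ (1 <= b <= n.-1)%N by lia.
have Sa : a.-1.+1 = a by lia.
have s_down t : (1 <= t <= n.-1)%N -> u t.+1 < u t -> s t = -1.
  by move=> tn lt; rewrite sgn ?lt_eqF // ltr0_sg // subr_lt0.
have s_up t : (1 <= t <= n.-1)%N -> u t < u t.+1 -> s t = 1.
  by move=> tn lt; rewrite sgn ?gt_eqF // gtr0_sg // subr_gt0.
case=> -[flat [_ [kb ka]]]; have ub : u b = u a by apply: flat; lia.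
- rewrite (s_down b) ?(s_up a.-1) ?Sa // -?ub //.
  by rewrite -opprD normrN ger0_norm ?addr_ge0 ?ler01.
- rewrite (s_up b) ?(s_down a.-1) ?Sa // -?ub //.
  by rewrite opprK ger0_norm ?addr_ge0 ?ler01.
Qed.

Theorem lemma2 (R : realFieldType) (n : nat) (B G Cn : R) (y u : nat -> R)
  (lam : R) (gm gp : nat -> R) (j l : nat) :
  (3 <= n)%N -> 1 <= B -> B <= G ->
  (forall t, (1 <= t <= n)%N -> - G <= y t <= G) ->
  0 < Cn ->
  offline_optimal n B Cn y u ->
  KKT n B Cn y u lam gm gp ->
  (0 < l)%N -> (2 <= j)%N -> (j + l - 1 <= n - 1)%N ->
  structure1 u B j (j + l - 1) \/ structure2 u B j (j + l - 1) ->
  lam <= (B + G) * l%:R / 2.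
Proof.
move=> _ _ _ y_bound _ _ [lam_ge0 [_ [s [_ [_ [_ [sgn [stat [_ slack]]]]]]]]] l_gt0 j_ge2 b_le shape.
have [flat interior] : (forall t, (j <= t <= j + l - 1)%N -> u t = u j) /\ - B < u j < B.
  by case: shape => -[? []].
have [[j_ge1 jb] [bn b_inside]] :
  ((1 <= j)%N /\ (j <= j + l - 1)%N) /\ (j + l - 1 <= n)%N /\ (j <= j + l - 1 <= n.-1)%N.
  by lia.
have gap := kink_signs_gap sgn j_ge2 b_inside shape.
have sum := flat_sum_telescopes stat slack flat interior j_ge1 bn jb.
have /andP[uj_lo uj_hi] := interior.
have term_bound t : (j <= t < (j + l - 1).+1)%N -> `|u t - y t| <= B + G.
  move=> /andP[jt tb]; have ut : u t = u j by apply: flat; lia.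
  have tn : (1 <= t <= n)%N by lia.
  have /andP[yt_lo yt_hi] := y_bound t tn.
  by rewrite ut ler_norml; apply/andP; split; lra.
have := norm_sum_nat_le_const term_bound.
rewrite sum normrM gap ger0_norm // (_ : ((j + l - 1).+1 - j)%N = l); last by lia.
by rewrite -[_ *+ l]mulr_natr ler_pdivlMr.
Qed.
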